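(* Let $\alpha>0$, let $(\theta_{1,N})$ be a real sequence and $\theta_{2,N}=\theta_{1,N}+\alpha/N$, and let $\eta_N(\theta)=\mathbf a(\theta)^*\boldsymbol\Pi_N\mathbf a(\theta)$. Then: (i) if $(\psi_N)$ is a sequence in $[-\pi,\pi]$ with $N\,\mathrm{dist}(\psi_N,\theta_{1,N})\to\infty$, then $\eta_N(\psi_N)\to1$; (ii) for every compact $\mathcal K\subset\mathbb R$, $\sup_{\beta\in\mathcal K}\big|\eta_N(\theta_{1,N}+\beta/N)-(1-\kappa(\beta))\big|\to0$, where $$\kappa(\beta)=\frac{\mathrm{sinc}(\beta c/2)^2+\mathrm{sinc}((\beta-\alpha)c/2)^2-2\,\mathrm{sinc}(\alpha c/2)\,\mathrm{sinc}(\beta c/2)\,\mathrm{sinc}((\beta-\alpha)c/2)}{1-\mathrm{sinc}(\alpha c/2)^2};$$ (iii) $\kappa(\beta)\le1$ for all $\beta\in\mathbb R$, with equality if and only if $\beta=0$ or $\beta=\alpha$.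
   Context: $c>0$; for each $N$, $M=M(N)\ge2$ with $M/N\to c$ as $N\to\infty$. Steering vector $\mathbf a(\theta)=M^{-1/2}(1,e^{\mathrm i\theta},\dots,e^{\mathrm i(M-1)\theta})^T$. $\boldsymbol\Pi_N$ is the orthogonal projection onto the orthogonal complement of $\mathrm{span}\{\mathbf a(\theta_{1,N}),\mathbf a(\theta_{2,N})\}$. $\mathrm{sinc}(x)=\sin(x)/x$ for $x\neq0$, $\mathrm{sinc}(0)=1$. $\mathrm{dist}(x,y)=\min_{j\in\mathbb Z}|x-y+2\pi j|$ is the distance modulo $2\pi$. *)

From Stdlib Require Import Reals Lra Rtopology.
Open Scope R_scope.

(* Complex numbers as pairs of reals (re, im). *)
Definition C := (R * R)%type.
Definition Cadd (u v : C) : C := (fst u + fst v, snd u + snd v).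
Definition Csub (u v : C) : C := (fst u - fst v, snd u - snd v).
Definition Cmul (u v : C) : C :=
  (fst u * fst v - snd u * snd v, fst u * snd v + snd u * fst v).
Definition Cconj (u : C) : C := (fst u, - snd u).
Definition C0 : C := (0, 0).

Fixpoint csum (f : nat -> C) (n : nat) : C :=
  match n with
  | O => C0
  | S n' => Cadd (csum f n') (f n')
  end.

(* vectors of C^M are functions nat -> C, only indices k < M matter *)
Definition cinner (M : nat) (u v : nat -> C) : C :=
  csum (fun k => Cmul (Cconj (u k)) (v k)) M.

(* steering vector a(theta) = M^{-1/2} (e^{i k theta})_{k=0..M-1} *)
Definition steer (M : nat) (theta : R) : nat -> C :=
  fun k => (cos (INR k * theta) / sqrt (INR M), sin (INR k * theta) / sqrt (INR M)).

(* p = Pi v, where Pi is the orthogonal projection onto the orthogonal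
   complement of span{u1,u2}: v - p lies in span{u1,u2} and p is orthogonal
   to u1 and u2. *)
Definition is_perp_proj (M : nat) (u1 u2 v p : nat -> C) : Prop :=
  (exists x y : C, forall k, (k < M)%nat ->
      p k = Csub (Csub (v k) (Cmul x (u1 k))) (Cmul y (u2 k)))
  /\ cinner M u1 p = C0 /\ cinner M u2 p = C0.

(* e = a(theta)^* Pi a(theta) (a real number, taken as its real part;
   the imaginary part is 0 since Pi is Hermitian). *)
Definition eta_rel (M : nat) (th1 th2 theta e : R) : Prop :=
  exists p, is_perp_proj M (steer M th1) (steer M th2) (steer M theta) p
            /\ e = fst (cinner M (steer M theta) p).

Definition sinc (x : R) : R := if Req_EM_T x 0 then 1 else sin x / x.

(* distance modulo 2 pi: min_j |x - y + 2 pi j| *)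
Definition dist2pi (x y : R) : R :=
  let t := x - y in
  let r := t - 2 * PI * IZR (Int_part (t / (2 * PI))) in
  Rmin r (2 * PI - r).

Definition kappa (c alpha beta : R) : R :=
  (sinc (beta * c / 2) ^ 2 + sinc ((beta - alpha) * c / 2) ^ 2
   - 2 * sinc (alpha * c / 2) * sinc (beta * c / 2) * sinc ((beta - alpha) * c / 2))
  / (1 - sinc (alpha * c / 2) ^ 2).

(* Up to phases, the Gram matrix of a(th1), a(th2), a(th) has the entries D_M of the
   pairwise differences, D_M the normalised Dirichlet kernel, and solving the normal
   equations of the projection gives exactly
     (1 - D_M(th2 - th1)^2) (1 - eta) = D_M(th - th1)^2 + D_M(th - th2)^2
                                         - 2 D_M(th2 - th1) D_M(th - th1) D_M(th - th2).
   On the scale th = th1 + beta/N, D_M(beta/N) tends to sinc(beta c / 2) uniformly on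
   compact sets, which gives (ii).  Far from th1, the identity
   M sin(t/2) D_M(t) = sin(M t/2) makes both D_M(th - th_j) vanish, which gives (i).
   For (iii), kappa <= 1 is the limit of eta >= 0.  Strictness comes from testing the
   projection against a vector orthogonal to a(th1) and a(th2): three blocks of length
   m = M/K carrying the coefficients of (X - z1)(X - z2), z_j = e^(i m (th_j - th)).
   Cauchy-Schwarz bounds eta below by a multiple of (1 - cos(m beta/N))
   (1 - cos(m (alpha - beta)/N)), whose limit is positive for K large. *)

From Pilot Require Import Defs.
From Stdlib Require Import Reals Rtopology.
From Stdlib Require Import Lra Lia.
Open Scope R_scope.

Fixpoint rsum (f : nat -> R) (n : nat) : R :=
  match n with O => 0 | S n' => rsum f n' + f n' end.

Lemma rsum_ext f g n : (forall k, (k < n)%nat -> f k = g k) -> rsum f n = rsum g n.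
Proof.
induction n as [|n IH]; simpl; intros H; [reflexivity|].
rewrite IH by (intros; apply H; lia); rewrite H by lia; reflexivity.
Qed.

Lemma rsum_linear a b f g n :
  rsum (fun k => a * f k + b * g k) n = a * rsum f n + b * rsum g n.
Proof. induction n as [|n IH]; simpl; [ring|]. rewrite IH. ring. Qed.

Lemma rsum_scal a f n : rsum (fun k => a * f k) n = a * rsum f n.
Proof. induction n as [|n IH]; simpl; [ring|]. rewrite IH. ring. Qed.

Lemma rsum_plus f g n : rsum (fun k => f k + g k) n = rsum f n + rsum g n.
Proof. induction n as [|n IH]; simpl; [ring|]. rewrite IH. ring. Qed.

Lemma rsum_minus f g n : rsum (fun k => f k - g k) n = rsum f n - rsum g n.
Proof. induction n as [|n IH]; simpl; [ring|]. rewrite IH. ring. Qed.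

Lemma rsum_opp f n : rsum (fun k => - f k) n = - rsum f n.
Proof. induction n as [|n IH]; simpl; [ring|]. rewrite IH. ring. Qed.

Lemma rsum_const a n : rsum (fun _ => a) n = INR n * a.
Proof. induction n as [|n IH]; simpl rsum; [simpl; ring|]. rewrite IH, S_INR. ring. Qed.

Lemma rsum_telescope g n : rsum (fun k => g (S k) - g k) n = g n - g O.
Proof. induction n as [|n IH]; simpl; [ring|]. rewrite IH. ring. Qed.

Lemma rsum_shift f n : rsum f (S n) = f O + rsum (fun k => f (S k)) n.
Proof. induction n as [|n IH]; simpl in *; [ring|]. rewrite IH. ring. Qed.

Lemma rsum_rev f n : rsum f n = rsum (fun k => f (n - 1 - k)%nat) n.
Proof.
revert f; induction n as [|n IH]; intros f; [reflexivity|].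
rewrite (rsum_shift (fun k => f (S n - 1 - k)%nat)); simpl rsum at 1; rewrite IH.
replace (f (S n - 1 - 0)%nat) with (f n) by (f_equal; lia).
rewrite Rplus_comm; f_equal; apply rsum_ext; intros k Hk; f_equal; lia.
Qed.

Lemma rsum_le f g n : (forall k, (k < n)%nat -> f k <= g k) -> rsum f n <= rsum g n.
Proof.
induction n as [|n IH]; simpl; intros H; [lra|].
pose proof (IH (fun k Hk => H k ltac:(lia))); pose proof (H n ltac:(lia)); lra.
Qed.

Lemma rsum_abs_le f n b : (forall k, (k < n)%nat -> Rabs (f k) <= b) ->
  Rabs (rsum f n) <= INR n * b.
Proof.
rewrite <- rsum_const; induction n as [|n IH]; simpl; intros H.
- rewrite Rabs_R0; lra.
- eapply Rle_trans; [apply Rabs_triang|].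
  pose proof (IH (fun k Hk => H k ltac:(lia))); pose proof (H n ltac:(lia)); lra.
Qed.

Lemma rsum_nonneg f n : (forall k, (k < n)%nat -> 0 <= f k) -> 0 <= rsum f n.
Proof.
intros H; replace 0 with (rsum (fun _ => 0) n) by (rewrite rsum_const; ring).
apply rsum_le; auto.
Qed.

Definition C1 : Defs.C := (1, 0).

Lemma C_eq (u v : Defs.C) : fst u = fst v -> snd u = snd v -> u = v.
Proof. destruct u, v; simpl; intros; subst; reflexivity. Qed.

Lemma csum_fst f n : fst (csum f n) = rsum (fun k => fst (f k)) n.
Proof. induction n as [|n IH]; simpl; [|rewrite IH]; reflexivity. Qed.

Lemma csum_snd f n : snd (csum f n) = rsum (fun k => snd (f k)) n.
Proof. induction n as [|n IH]; simpl; [|rewrite IH]; reflexivity. Qed.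

Lemma csum_ext f g n : (forall k, (k < n)%nat -> f k = g k) -> csum f n = csum g n.
Proof.
induction n as [|n IH]; simpl; intros H; [reflexivity|].
rewrite IH by (intros; apply H; lia); rewrite H by lia; reflexivity.
Qed.

Lemma cinner_fst M u v : fst (cinner M u v) =
  rsum (fun k => fst (u k) * fst (v k) + snd (u k) * snd (v k)) M.
Proof. unfold cinner; rewrite csum_fst; apply rsum_ext; intros; simpl; ring. Qed.

Lemma cinner_snd M u v : snd (cinner M u v) =
  rsum (fun k => fst (u k) * snd (v k) - snd (u k) * fst (v k)) M.
Proof. unfold cinner; rewrite csum_snd; apply rsum_ext; intros; simpl; ring. Qed.

Lemma cinner_affine M u v u1 u2 p x y :
  (forall k, (k < M)%nat -> p k = Csub (Csub (v k) (Cmul x (u1 k))) (Cmul y (u2 k))) ->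
  cinner M u p =
  Csub (Csub (cinner M u v) (Cmul x (cinner M u u1))) (Cmul y (cinner M u u2)).
Proof.
intros Hp; destruct x as [x1 x2], y as [y1 y2].
apply C_eq; simpl; rewrite !cinner_fst, !cinner_snd.
- rewrite (rsum_ext _ (fun k => 1 * (fst (u k) * fst (v k) + snd (u k) * snd (v k))
     + (- x1) * (fst (u k) * fst (u1 k) + snd (u k) * snd (u1 k))
     + x2 * (fst (u k) * snd (u1 k) - snd (u k) * fst (u1 k))
     + (- y1) * (fst (u k) * fst (u2 k) + snd (u k) * snd (u2 k))
     + y2 * (fst (u k) * snd (u2 k) - snd (u k) * fst (u2 k))))
    by (intros k Hk; rewrite Hp by auto; simpl; ring).
  rewrite !rsum_plus, !rsum_scal, ?rsum_plus, ?rsum_minus; ring.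
- rewrite (rsum_ext _ (fun k => 1 * (fst (u k) * snd (v k) - snd (u k) * fst (v k))
     + (- x1) * (fst (u k) * snd (u1 k) - snd (u k) * fst (u1 k))
     + (- x2) * (fst (u k) * fst (u1 k) + snd (u k) * snd (u1 k))
     + (- y1) * (fst (u k) * snd (u2 k) - snd (u k) * fst (u2 k))
     + (- y2) * (fst (u k) * fst (u2 k) + snd (u k) * snd (u2 k))))
    by (intros k Hk; rewrite Hp by auto; simpl; ring).
  rewrite !rsum_plus, !rsum_scal, ?rsum_plus, ?rsum_minus; ring.
Qed.

Lemma cinner_conj M u v : cinner M u v = Cconj (cinner M v u).
Proof.
apply C_eq; unfold Cconj; simpl; rewrite ?cinner_fst, ?cinner_snd.
- apply rsum_ext; intros; ring.
- rewrite <- rsum_opp; apply rsum_ext; intros; ring.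
Qed.

(** * The Dirichlet kernel *)

(* [dirichlet M t] is the real number [(1/M) sum_(k<M) e^(i (k - (M-1)/2) t)]. *)
Definition dirichlet_phase (M : nat) (t : R) := (INR M - 1) * t / 2.
Definition dirichlet (M : nat) (t : R) :=
  rsum (fun k => cos (INR k * t - dirichlet_phase M t)) M / INR M.

Lemma dirichlet_imaginary_part M t :
  rsum (fun k => sin (INR k * t - dirichlet_phase M t)) M = 0.
Proof.
set (S := rsum _ M).
assert (S = - S); [|lra].
unfold S at 1; rewrite rsum_rev; unfold S; rewrite <- rsum_opp.
apply rsum_ext; intros k Hk.
rewrite !minus_INR by lia; simpl INR.
replace ((INR M - 1 - INR k) * t - dirichlet_phase M t)
  with (- (INR k * t - dirichlet_phase M t)) by (unfold dirichlet_phase; field).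
rewrite sin_neg; ring.
Qed.

Lemma geometric_trig_sums M t :
  rsum (fun k => cos (INR k * t)) M = INR M * cos (dirichlet_phase M t) * dirichlet M t
  /\ rsum (fun k => sin (INR k * t)) M = INR M * sin (dirichlet_phase M t) * dirichlet M t.
Proof.
destruct (Nat.eq_dec M 0) as [->|HM]; [simpl; split; ring|].
assert (HMr : INR M <> 0) by (apply not_0_INR; auto).
set (ph := dirichlet_phase M t).
assert (Hk : forall k, INR k * t = (INR k * t - ph) + ph) by (intros; ring).
unfold dirichlet; split.
- rewrite (rsum_ext _ (fun k => cos ph * cos (INR k * t - ph) + (- sin ph) * sin (INR k * t - ph)))
    by (intros k _; rewrite (Hk k) at 1; rewrite cos_plus; ring).
  rewrite rsum_linear; unfold ph; rewrite dirichlet_imaginary_part; field; auto.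
- rewrite (rsum_ext _ (fun k => sin ph * cos (INR k * t - ph) + cos ph * sin (INR k * t - ph)))
    by (intros k _; rewrite (Hk k) at 1; rewrite sin_plus; ring).
  rewrite rsum_linear; unfold ph; rewrite dirichlet_imaginary_part; field; auto.
Qed.

Lemma cinner_steer M x y : (1 <= M)%nat ->
  cinner M (steer M x) (steer M y) =
  (cos (dirichlet_phase M (y - x)) * dirichlet M (y - x),
   sin (dirichlet_phase M (y - x)) * dirichlet M (y - x)).
Proof.
intros HM; assert (HMr : 0 < INR M) by (apply lt_0_INR; lia).
assert (Hs : / INR M = / sqrt (INR M) * / sqrt (INR M))
  by (rewrite <- Rinv_mult, sqrt_sqrt; lra).
destruct (geometric_trig_sums M (y - x)) as [H1 H2].
apply C_eq; [rewrite cinner_fst | rewrite cinner_snd]; simpl.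
- rewrite (rsum_ext _ (fun k => / INR M * cos (INR k * (y - x)))).
  + rewrite rsum_scal, H1; field; lra.
  + intros k _; unfold steer; simpl; rewrite Rmult_minus_distr_l, cos_minus, Hs.
    unfold Rdiv; ring.
- rewrite (rsum_ext _ (fun k => / INR M * sin (INR k * (y - x)))).
  + rewrite rsum_scal, H2; field; lra.
  + intros k _; unfold steer; simpl; rewrite Rmult_minus_distr_l, sin_minus, Hs.
    unfold Rdiv; ring.
Qed.

Lemma dirichlet_0 M : (1 <= M)%nat -> dirichlet M 0 = 1.
Proof.
intros HM; unfold dirichlet; rewrite (rsum_ext _ (fun _ => 1)).
- rewrite rsum_const; field; apply not_0_INR; lia.
- intros k _; unfold dirichlet_phase; rewrite !Rmult_0_r, Rdiv_0_l, Rminus_0_r.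
  apply cos_0.
Qed.

Lemma cinner_steer_self M x : (1 <= M)%nat -> cinner M (steer M x) (steer M x) = C1.
Proof.
intros HM; rewrite cinner_steer, Rminus_diag, dirichlet_0 by auto.
unfold dirichlet_phase; rewrite Rmult_0_r, Rdiv_0_l, cos_0, sin_0.
unfold C1; f_equal; ring.
Qed.

Lemma dirichlet_bound M t : (1 <= M)%nat -> Rabs (dirichlet M t) <= 1.
Proof.
intros HM; assert (HMr : 0 < INR M) by (apply lt_0_INR; lia).
assert (H : Rabs (rsum (fun k => cos (INR k * t - dirichlet_phase M t)) M) <= INR M * 1)
  by (apply rsum_abs_le; intros; apply Rabs_le, COS_bound).
unfold dirichlet, Rdiv; rewrite Rabs_mult, Rabs_inv, (Rabs_right (INR M)) by lra.
apply (Rmult_le_reg_r (INR M)); auto; rewrite Rmult_assoc, Rinv_l by lra; lra.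
Qed.

Lemma dirichlet_closed_form M t :
  INR M * sin (t / 2) * dirichlet M t = sin (INR M * t / 2).
Proof.
destruct (Nat.eq_dec M 0) as [->|HM].
{ simpl; replace (0 * t / 2) with 0 by field; rewrite sin_0; ring. }
assert (HMr : INR M <> 0) by (apply not_0_INR; auto).
set (ph := dirichlet_phase M t).
set (g := fun j => sin (INR j * t - ph - t / 2)).
(* [2 sin(t/2) cos(a) = sin(a + t/2) - sin(a - t/2)] makes the sum telescope. *)
assert (H : rsum (fun k => 2 * sin (t / 2) * cos (INR k * t - ph)) M
            = 2 * sin (INR M * t / 2)).
{ rewrite (rsum_ext _ (fun k => g (S k) - g k)).
  - rewrite rsum_telescope; unfold g, ph, dirichlet_phase; simpl INR.
    replace (INR M * t - (INR M - 1) * t / 2 - t / 2) with (INR M * t / 2) by field.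
    replace (0 * t - (INR M - 1) * t / 2 - t / 2) with (- (INR M * t / 2)) by field.
    rewrite sin_neg; ring.
  - intros k _; unfold g; rewrite S_INR; set (a := INR k * t - ph).
    replace ((INR k + 1) * t - ph - t / 2) with (a + t / 2) by (unfold a; field).
    rewrite (sin_plus a), (sin_minus a); ring. }
rewrite rsum_scal in H; unfold dirichlet; fold ph; field_simplify; [lra|auto].
Qed.

(** * The exact formula for [eta] *)

Lemma perp_proj_gram_identity (h1 h2 r x y : Defs.C) e :
  C0 = Csub (Csub h1 (Cmul x C1)) (Cmul y r) ->
  C0 = Csub (Csub h2 (Cmul x (Cconj r))) (Cmul y C1) ->
  e = fst (Csub (Csub C1 (Cmul x (Cconj h1))) (Cmul y (Cconj h2))) ->
  (1 - (fst r ^ 2 + snd r ^ 2)) * (1 - e) =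
  fst h1 ^ 2 + snd h1 ^ 2 + fst h2 ^ 2 + snd h2 ^ 2
  - 2 * ((fst r * fst h2 - snd r * snd h2) * fst h1
         + (fst r * snd h2 + snd r * fst h2) * snd h1).
Proof.
destruct h1 as [a1 b1], h2 as [a2 b2], r as [r1 r2], x as [x1 x2], y as [y1 y2].
unfold C0, Csub, Cmul, Cconj, C1; simpl; intros E1 E2 ->.
injection E1 as E1a E1b; injection E2 as E2a E2b.
assert (a1 = x1 + (y1 * r1 - y2 * r2)) by lra.
assert (b1 = x2 + (y1 * r2 + y2 * r1)) by lra.
assert (a2 = x1 * r1 + x2 * r2 + y1) by lra.
assert (b2 = x2 * r1 - x1 * r2 + y2) by lra.
subst a1 b1 a2 b2; ring.
Qed.

Lemma gram_phase_cancel Ds D1 D2 cs ss c2 s2 e :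
  ss ^ 2 + cs ^ 2 = 1 -> s2 ^ 2 + c2 ^ 2 = 1 ->
  (1 - ((cs * Ds) ^ 2 + (ss * Ds) ^ 2)) * (1 - e) =
  ((cs * c2 - ss * s2) * D1) ^ 2 + ((ss * c2 + cs * s2) * D1) ^ 2
  + (c2 * D2) ^ 2 + (s2 * D2) ^ 2
  - 2 * ((cs * Ds * (c2 * D2) - ss * Ds * (s2 * D2)) * ((cs * c2 - ss * s2) * D1)
         + (cs * Ds * (s2 * D2) + ss * Ds * (c2 * D2)) * ((ss * c2 + cs * s2) * D1)) ->
  (1 - Ds ^ 2) * (1 - e) = D1 ^ 2 + D2 ^ 2 - 2 * Ds * D1 * D2.
Proof.
intros H1 H2 Q.
replace ((cs * Ds) ^ 2 + (ss * Ds) ^ 2) with (Ds ^ 2 * (ss ^ 2 + cs ^ 2)) in Q by ring.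
rewrite H1, Rmult_1_r in Q; rewrite Q.
replace (D1 ^ 2 + D2 ^ 2 - 2 * Ds * D1 * D2) with
  ((D1 ^ 2 - 2 * Ds * D1 * D2) * (ss ^ 2 + cs ^ 2) * (s2 ^ 2 + c2 ^ 2)
   + D2 ^ 2 * (s2 ^ 2 + c2 ^ 2)) by (rewrite H1, H2; ring).
ring.
Qed.

(* Solving the normal equations of the projection in the Gram matrix of
   [a(th1), a(th2), a(th)], whose phases cancel out. *)
Lemma eta_rel_dirichlet M th1 th2 th e : (1 <= M)%nat -> eta_rel M th1 th2 th e ->
  (1 - dirichlet M (th2 - th1) ^ 2) * (1 - e) =
  dirichlet M (th - th1) ^ 2 + dirichlet M (th - th2) ^ 2
  - 2 * dirichlet M (th2 - th1) * dirichlet M (th - th1) * dirichlet M (th - th2).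
Proof.
intros HM [p [[[x [y Hp]] [H1 H2]] He]].
pose proof (fun u => cinner_affine M u _ _ _ p x y Hp) as L.
pose proof (L (steer M th1)) as L1; pose proof (L (steer M th2)) as L2.
pose proof (f_equal fst (L (steer M th))) as L3.
rewrite H1 in L1; rewrite H2 in L2; rewrite <- He in L3.
rewrite (cinner_conj M (steer M th2) (steer M th1)) in L2.
rewrite (cinner_conj M (steer M th) (steer M th1)),
        (cinner_conj M (steer M th) (steer M th2)) in L3.
rewrite !cinner_steer_self in L1, L2, L3 by auto.
pose proof (perp_proj_gram_identity _ _ _ _ _ _ L1 L2 L3) as Q.
rewrite !cinner_steer in Q by auto; cbn [fst snd] in Q.
replace (dirichlet_phase M (th - th1))
  with (dirichlet_phase M (th2 - th1) + dirichlet_phase M (th - th2)) in Q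
  by (unfold dirichlet_phase; field).
rewrite cos_plus, sin_plus in Q.
assert (SC : forall a, sin a ^ 2 + cos a ^ 2 = 1)
  by (intro a; rewrite <- (sin2_cos2 a); unfold Rsqr; ring).
exact (gram_phase_cancel _ _ _ _ _ _ _ _ (SC _) (SC _) Q).
Qed.

Lemma perp_proj_value M u1 u2 v p : is_perp_proj M u1 u2 v p ->
  fst (cinner M v p) = fst (cinner M p p).
Proof.
intros [[x [y Hp]] [H1 H2]].
rewrite (cinner_affine M p v u1 u2 p x y Hp), (cinner_conj M p u1), (cinner_conj M p u2),
  H1, H2, (cinner_conj M p v).
destruct (cinner M v p), x, y; unfold Csub, Cmul, C0, Cconj; simpl; ring.
Qed.

Lemma perp_proj_test M u1 u2 v p w : is_perp_proj M u1 u2 v p ->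
  cinner M w u1 = C0 -> cinner M w u2 = C0 -> cinner M w p = cinner M w v.
Proof.
intros [[x [y Hp]] _] W1 W2.
rewrite (cinner_affine M w v u1 u2 p x y Hp), W1, W2.
destruct (cinner M w v), x, y; unfold Csub, Cmul, C0; simpl; f_equal; ring.
Qed.

Lemma eta_rel_nonneg M th1 th2 th e : eta_rel M th1 th2 th e -> 0 <= e.
Proof.
intros [p [Hp ->]]; rewrite (perp_proj_value _ _ _ _ _ Hp), cinner_fst.
apply rsum_nonneg; intros; nra.
Qed.

Lemma cauchy_schwarz_rsum (w1 w2 p1 p2 : nat -> R) n :
  0 < rsum (fun k => w1 k ^ 2 + w2 k ^ 2) n ->
  rsum (fun k => w1 k * p1 k + w2 k * p2 k) n ^ 2
  + rsum (fun k => w1 k * p2 k - w2 k * p1 k) n ^ 2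
  <= rsum (fun k => w1 k ^ 2 + w2 k ^ 2) n * rsum (fun k => p1 k ^ 2 + p2 k ^ 2) n.
Proof.
set (A := rsum (fun k => w1 k ^ 2 + w2 k ^ 2) n).
set (P := rsum (fun k => p1 k ^ 2 + p2 k ^ 2) n).
set (Br := rsum (fun k => w1 k * p1 k + w2 k * p2 k) n).
set (Bi := rsum (fun k => w1 k * p2 k - w2 k * p1 k) n).
intros HA.
(* [|A p - <w, p> w|^2 >= 0], expanded. *)
assert (H0 : 0 <= rsum (fun k => (A * p1 k - Br * w1 k + Bi * w2 k) ^ 2
                               + (A * p2 k - Br * w2 k - Bi * w1 k) ^ 2) n)
  by (apply rsum_nonneg; intros; apply Rplus_le_le_0_compat; apply pow2_ge_0).
rewrite (rsum_ext _ (fun k =>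
    (A ^ 2 * (p1 k ^ 2 + p2 k ^ 2) + (Br ^ 2 + Bi ^ 2) * (w1 k ^ 2 + w2 k ^ 2))
    + ((- 2 * A * Br) * (w1 k * p1 k + w2 k * p2 k)
       + (- 2 * A * Bi) * (w1 k * p2 k - w2 k * p1 k)))) in H0 by (intros; ring).
rewrite rsum_plus, !rsum_linear in H0; fold A P Br Bi in H0.
assert (0 <= A * (A * P - (Br ^ 2 + Bi ^ 2))) by nra.
destruct (Rle_or_lt 0 (A * P - (Br ^ 2 + Bi ^ 2))); nra.
Qed.

Lemma eta_rel_test_bound M th1 th2 th e w : eta_rel M th1 th2 th e ->
  cinner M w (steer M th1) = C0 -> cinner M w (steer M th2) = C0 ->
  0 < fst (cinner M w w) ->
  fst (cinner M w (steer M th)) ^ 2 + snd (cinner M w (steer M th)) ^ 2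
  <= fst (cinner M w w) * e.
Proof.
intros [p [Hp ->]] W1 W2 HA.
rewrite <- (perp_proj_test _ _ _ _ _ w Hp W1 W2), (perp_proj_value _ _ _ _ _ Hp).
rewrite !cinner_fst, cinner_snd; rewrite cinner_fst in HA.
replace (rsum (fun k => fst (w k) * fst (w k) + snd (w k) * snd (w k)) M) with
  (rsum (fun k => fst (w k) ^ 2 + snd (w k) ^ 2) M) in * by (apply rsum_ext; intros; ring).
replace (rsum (fun k => fst (p k) * fst (p k) + snd (p k) * snd (p k)) M) with
  (rsum (fun k => fst (p k) ^ 2 + snd (p k) ^ 2) M) by (apply rsum_ext; intros; ring).
exact (cauchy_schwarz_rsum (fun k => fst (w k)) (fun k => snd (w k))
  (fun k => fst (p k)) (fun k => snd (p k)) M HA).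
Qed.

Lemma Rabs_le_inv a b : Rabs a <= b -> - b <= a <= b.
Proof. unfold Rabs; destruct (Rcase_abs a); intros; lra. Qed.

Lemma Rdiv_le_of_le_mult a b c : 0 < b -> a <= c * b -> a / b <= c.
Proof.
intros Hb H; apply (Rmult_le_reg_r b); auto.
unfold Rdiv; rewrite Rmult_assoc, Rinv_l by lra; lra.
Qed.

Lemma Rdiv_lt_of_lt_mult a b c : 0 < b -> a < c * b -> a / b < c.
Proof.
intros Hb H; apply (Rmult_lt_reg_r b); auto.
unfold Rdiv; rewrite Rmult_assoc, Rinv_l by lra; lra.
Qed.

Lemma Rabs_mult_le x y X Y : Rabs x <= X -> Rabs y <= Y -> Rabs (x * y) <= X * Y.
Proof. intros; rewrite Rabs_mult; apply Rmult_le_compat; auto; apply Rabs_pos. Qed.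

Lemma Rabs_triang3 x y z : Rabs (x + y + z) <= Rabs x + Rabs y + Rabs z.
Proof.
eapply Rle_trans; [apply Rabs_triang|]; pose proof (Rabs_triang x y); lra.
Qed.

Lemma sin_lipschitz a b : Rabs (sin a - sin b) <= Rabs (a - b).
Proof.
destruct (MVT_abs sin cos b a) as [x [-> _]]; [intros; apply derivable_pt_lim_sin|].
apply Rle_trans with (1 * Rabs (a - b)); [|lra].
apply Rmult_le_compat_r; [apply Rabs_pos | apply Rabs_le, COS_bound].
Qed.

Lemma cos_lipschitz a b : Rabs (cos a - cos b) <= Rabs (a - b).
Proof.
destruct (MVT_abs cos (fun x => - sin x) b a) as [x [-> _]];
  [intros; apply derivable_pt_lim_cos|].
rewrite Rabs_Ropp; apply Rle_trans with (1 * Rabs (a - b)); [|lra].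
apply Rmult_le_compat_r; [apply Rabs_pos | apply Rabs_le, SIN_bound].
Qed.

Lemma Rabs_sin_le x : Rabs (sin x) <= Rabs x.
Proof. rewrite <- (Rminus_0_r x) at 2; rewrite <- (Rminus_0_r (sin x)), <- sin_0 at 1.
apply sin_lipschitz. Qed.

Lemma sin_ge_cubic x : 0 <= x -> x <= 4 -> x - x ^ 3 / 6 <= sin x.
Proof.
intros H0 H4; destruct (pre_sin_bound x 0 H0 H4) as [H _].
unfold sin_approx, sin_term in H; simpl in H; lra.
Qed.

Lemma sin_le_id x : 0 <= x -> sin x <= x.
Proof. intros [H|<-]; [left; apply sin_lt_x; auto | rewrite sin_0; lra]. Qed.

Lemma sin_cubic_error x : Rabs x <= 4 -> Rabs (x - sin x) <= Rabs x ^ 3 / 6.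
Proof.
assert (Hpos : forall y, 0 <= y <= 4 -> Rabs (y - sin y) <= Rabs y ^ 3 / 6).
{ intros y Hy; pose proof (sin_ge_cubic y (proj1 Hy) (proj2 Hy)).
  pose proof (sin_le_id y (proj1 Hy)).
  rewrite (Rabs_right y) by lra; apply Rabs_le; lra. }
intros Hx; destruct (Rle_or_lt 0 x).
- rewrite (Rabs_right x) in Hx by lra; apply Hpos; lra.
- rewrite (Rabs_left x) in Hx by lra.
  replace (x - sin x) with (- (- x - sin (- x))) by (rewrite sin_neg; ring).
  rewrite Rabs_Ropp, <- (Rabs_Ropp x); apply Hpos; lra.
Qed.

Lemma Rabs_sin_lt x : x <> 0 -> Rabs (sin x) < Rabs x.
Proof.
assert (Hpos : forall y, 0 < y <= 1 -> Rabs (sin y) < y).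
{ intros y Hy; pose proof (sin_lt_x y (proj1 Hy)).
  pose proof (sin_ge_cubic y ltac:(lra) ltac:(lra)).
  assert (y ^ 3 <= y) by nra; apply Rabs_def1; lra. }
intros Hx; destruct (Rle_or_lt (Rabs x) 1) as [H1|H1].
- destruct (Rle_or_lt 0 x).
  + rewrite (Rabs_right x) in * by lra; apply Hpos; lra.
  + rewrite (Rabs_left x) in * by lra; rewrite <- Rabs_Ropp, <- sin_neg; apply Hpos; lra.
- pose proof (SIN_bound x); apply Rle_lt_trans with 1; [apply Rabs_le|]; lra.
Qed.

Lemma sinc_nz x : x <> 0 -> sinc x = sin x / x.
Proof. intros H; unfold sinc; destruct (Req_EM_T x 0); [contradiction | reflexivity]. Qed.

Lemma sinc_0 : sinc 0 = 1.
Proof. unfold sinc; destruct (Req_EM_T 0 0); [reflexivity | contradiction]. Qed.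

Lemma sinc_opp x : sinc (- x) = sinc x.
Proof.
destruct (Req_EM_T x 0) as [->|H]; [rewrite Ropp_0; reflexivity|].
rewrite !sinc_nz, sin_neg by lra; field; auto.
Qed.

Lemma Rabs_sinc_nz x : x <> 0 -> Rabs (sinc x) = Rabs (sin x) / Rabs x.
Proof. intros H; rewrite sinc_nz by auto; unfold Rdiv; rewrite Rabs_mult, Rabs_inv; reflexivity. Qed.

Lemma sinc_bound x : Rabs (sinc x) <= 1.
Proof.
destruct (Req_EM_T x 0) as [->|H]; [rewrite sinc_0, Rabs_R1; lra|].
rewrite Rabs_sinc_nz by auto; apply Rdiv_le_of_le_mult; [apply Rabs_pos_lt; auto|].
rewrite Rmult_1_l; apply Rabs_sin_le.
Qed.

Lemma sinc_lt_1 x : x <> 0 -> Rabs (sinc x) < 1.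
Proof.
intros H; rewrite Rabs_sinc_nz by auto; apply Rdiv_lt_of_lt_mult; [apply Rabs_pos_lt; auto|].
rewrite Rmult_1_l; apply Rabs_sin_lt; auto.
Qed.

(** * The Dirichlet kernel approximates sinc *)

Lemma dirichlet_lipschitz M x y : (1 <= M)%nat ->
  Rabs (dirichlet M x - dirichlet M y) <= INR M / 2 * Rabs (x - y).
Proof.
intros HM; assert (HMr : 0 < INR M) by (apply lt_0_INR; lia).
unfold dirichlet; rewrite <- Rdiv_minus_distr, <- rsum_minus.
unfold Rdiv at 1; rewrite Rabs_mult, Rabs_inv, (Rabs_right (INR M)) by lra.
apply Rdiv_le_of_le_mult; auto; rewrite Rmult_comm.
apply rsum_abs_le; intros k Hk; eapply Rle_trans; [apply cos_lipschitz|].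
replace (INR k * x - dirichlet_phase M x - (INR k * y - dirichlet_phase M y))
  with ((INR k - (INR M - 1) / 2) * (x - y)) by (unfold dirichlet_phase; field).
rewrite Rabs_mult; apply Rmult_le_compat_r; [apply Rabs_pos|].
assert (INR k + 1 <= INR M) by (rewrite <- S_INR; apply le_INR; lia).
pose proof (pos_INR k); apply Rabs_le; lra.
Qed.

Lemma dirichlet_sinc_approx n u : (1 <= n)%nat -> Rabs u <= INR n ->
  Rabs (dirichlet n (2 * u / INR n) - sinc u) <= (u / INR n) ^ 2 / 6.
Proof.
intros Hn Hu; assert (Hr : 0 < INR n) by (apply lt_0_INR; lia).
destruct (Req_EM_T u 0) as [->|Hu0].
{ rewrite Rmult_0_r, !Rdiv_0_l, sinc_0, dirichlet_0, Rminus_diag, Rabs_R0 by auto; lra. }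
set (w := u / INR n).
assert (Hw0 : w <> 0) by (unfold w, Rdiv; apply Rmult_integral_contrapositive; split;
  [auto | apply Rinv_neq_0_compat; lra]).
assert (Hw1 : Rabs w <= 1)
  by (unfold w, Rdiv; rewrite Rabs_mult, Rabs_inv, (Rabs_right (INR n)) by lra;
      apply Rdiv_le_of_le_mult; lra).
pose proof (dirichlet_closed_form n (2 * u / INR n)) as HC.
replace (2 * u / INR n / 2) with w in HC by (unfold w; field; lra).
replace (INR n * (2 * u / INR n) / 2) with u in HC by (field; lra).
(* [sinc u = D sin w / w] with [w = u / n], so the error is [D (w - sin w) / w]. *)
rewrite sinc_nz, <- HC by auto.
replace (dirichlet n (2 * u / INR n) - INR n * sin w * dirichlet n (2 * u / INR n) / u)
  with (dirichlet n (2 * u / INR n) * ((w - sin w) / w)) by (unfold w; field; split; lra).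
rewrite Rabs_mult, <- (Rmult_1_l (w ^ 2 / 6)).
apply Rmult_le_compat; [apply Rabs_pos | apply Rabs_pos | apply dirichlet_bound; auto|].
assert (0 < Rabs w) by (apply Rabs_pos_lt; auto).
unfold Rdiv at 1; rewrite Rabs_mult, Rabs_inv; apply Rdiv_le_of_le_mult; auto.
replace (w ^ 2 / 6 * Rabs w) with (Rabs w ^ 3 / 6) by (rewrite <- (pow2_abs w); field).
apply sin_cubic_error; lra.
Qed.

Lemma sq_div_le a n : 0 < n -> Rabs a <= n -> (a / n) ^ 2 <= Rabs a / n.
Proof.
intros Hn Ha; unfold Rdiv at 1.
rewrite <- pow2_abs, Rabs_mult, Rabs_inv, (Rabs_right n) by lra; fold (Rabs a / n).
assert (0 <= Rabs a / n) by (apply Rmult_le_pos; [apply Rabs_pos | left; apply Rinv_0_lt_compat; auto]).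
assert (Rabs a / n <= 1) by (apply Rdiv_le_of_le_mult; lra).
simpl; nra.
Qed.

Lemma sinc_lipschitz u v : Rabs (sinc u - sinc v) <= Rabs (u - v).
Proof.
apply le_epsilon; intros eps He.
pose proof (Rabs_pos u) as Pu; pose proof (Rabs_pos v) as Pv.
destruct (INR_unbounded ((Rabs u + Rabs v) / eps + Rabs u + Rabs v + 1)) as [n Hn].
assert (H0 : 0 <= (Rabs u + Rabs v) / eps)
  by (apply Rmult_le_pos; [lra | left; apply Rinv_0_lt_compat; lra]).
assert (Hn1 : (1 <= n)%nat) by (destruct n; [simpl in Hn; lra | lia]).
assert (Hr : 0 < INR n) by (apply lt_0_INR; lia).
pose proof (dirichlet_sinc_approx n u Hn1 ltac:(lra)) as Au.
pose proof (dirichlet_sinc_approx n v Hn1 ltac:(lra)) as Av.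
pose proof (dirichlet_lipschitz n (2 * u / INR n) (2 * v / INR n) Hn1) as L.
replace (INR n / 2 * Rabs (2 * u / INR n - 2 * v / INR n)) with (Rabs (u - v)) in L
  by (replace (2 * u / INR n - 2 * v / INR n) with (2 / INR n * (u - v)) by (field; lra);
      rewrite Rabs_mult, (Rabs_right (2 / INR n)) by (apply Rle_ge, Rlt_le, Rdiv_lt_0_compat; lra);
      field; lra).
pose proof (sq_div_le u (INR n) Hr ltac:(lra)); pose proof (sq_div_le v (INR n) Hr ltac:(lra)).
assert (Heps : (Rabs u + Rabs v) / INR n <= eps).
{ apply Rdiv_le_of_le_mult; auto.
  assert (Hq : (Rabs u + Rabs v) / eps <= INR n) by lra.
  apply Rmult_le_compat_l with (r := eps) in Hq; [|lra].
  replace (eps * ((Rabs u + Rabs v) / eps)) with (Rabs u + Rabs v) in Hq by (field; lra); lra. }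
replace (sinc u - sinc v) with
  (- (dirichlet n (2 * u / INR n) - sinc u) + (dirichlet n (2 * v / INR n) - sinc v)
   + (dirichlet n (2 * u / INR n) - dirichlet n (2 * v / INR n))) by ring.
eapply Rle_trans; [apply Rabs_triang3|]; rewrite Rabs_Ropp.
unfold Rdiv in *; lra.
Qed.

(** * Perturbation of the limit formula *)

Definition gram_ratio (a b s : R) := (a ^ 2 + b ^ 2 - 2 * s * a * b) / (1 - s ^ 2).

Lemma gram_numerator_perturb a b s a' b' s' d :
  Rabs a <= 1 -> Rabs b <= 1 -> Rabs s <= 1 -> Rabs a' <= 1 -> Rabs b' <= 1 ->
  Rabs (a' - a) <= d -> Rabs (b' - b) <= d -> Rabs (s' - s) <= d ->
  Rabs ((a' ^ 2 + b' ^ 2 - 2 * s' * a' * b') - (a ^ 2 + b ^ 2 - 2 * s * a * b))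
  <= 10 * d.
Proof.
intros Ha Hb Hs Ha' Hb' Hda Hdb Hds.
assert (Hsum : forall x y, Rabs x <= 1 -> Rabs y <= 1 -> Rabs (x + y) <= 2)
  by (intros x y Hx Hy; eapply Rle_trans; [apply Rabs_triang | lra]).
replace (a' ^ 2 + b' ^ 2 - 2 * s' * a' * b' - (a ^ 2 + b ^ 2 - 2 * s * a * b)) with
  ((a' - a) * (a' + a) + (b' - b) * (b' + b)
   + (-2) * ((s' - s) * (a' * b') + (s * (a' - a)) * b' + (s * a) * (b' - b))) by ring.
eapply Rle_trans; [apply Rabs_triang3|].
assert (Rabs ((a' - a) * (a' + a)) <= d * 2) by (apply Rabs_mult_le; auto).
assert (Rabs ((b' - b) * (b' + b)) <= d * 2) by (apply Rabs_mult_le; auto).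
assert (Rabs ((-2) * ((s' - s) * (a' * b') + (s * (a' - a)) * b' + (s * a) * (b' - b)))
        <= 2 * (d * (1 * 1) + (1 * d) * 1 + (1 * 1) * d)).
{ apply Rabs_mult_le; [rewrite Rabs_left; lra|].
  eapply Rle_trans; [apply Rabs_triang3|].
  apply Rplus_le_compat; [apply Rplus_le_compat|];
    repeat apply Rabs_mult_le; auto. }
lra.
Qed.

Lemma ratio_perturb n n' D D' d m :
  Rabs n <= 4 -> Rabs (n' - n) <= 10 * d -> m <= D <= 1 -> Rabs (D' - D) <= 2 * d ->
  0 < m -> d <= m / 4 ->
  0 < D' /\ Rabs (n' / D' - n / D) <= 36 * d / m ^ 2.
Proof.
intros Hn Hdn HD HdD Hm Hdm.
assert (HD' : m / 2 <= D') by (apply Rabs_le_inv in HdD; lra).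
split; [lra|].
replace (n' / D' - n / D) with (((n' - n) * D + n * (- (D' - D))) / (D * D')) by (field; lra).
unfold Rdiv at 1; rewrite Rabs_mult, Rabs_inv, (Rabs_right (D * D')) by nra.
apply Rdiv_le_of_le_mult; [nra|].
assert (Hnum : Rabs ((n' - n) * D + n * (- (D' - D))) <= (10 * d) * 1 + 4 * (2 * d)).
{ eapply Rle_trans; [apply Rabs_triang|].
  apply Rplus_le_compat; apply Rabs_mult_le; auto;
    [rewrite Rabs_right; lra | rewrite Rabs_Ropp; auto]. }
assert (Hd0 : 0 <= d) by (pose proof (Rabs_pos (D' - D)); lra).
assert (Hden : m * (m / 2) <= D * D') by (apply Rmult_le_compat; lra).
replace (36 * d / m ^ 2 * (D * D')) with (18 * d * ((D * D') / (m * (m / 2)))) by (field; lra).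
assert (1 <= D * D' / (m * (m / 2))).
{ apply (Rmult_le_reg_r (m * (m / 2))); [nra|].
  unfold Rdiv; rewrite Rmult_assoc, Rinv_l by nra; lra. }
nra.
Qed.

Lemma gram_ratio_perturb a b s a' b' s' d m :
  Rabs a <= 1 -> Rabs b <= 1 -> Rabs s <= 1 -> Rabs a' <= 1 -> Rabs b' <= 1 -> Rabs s' <= 1 ->
  0 < m -> m <= 1 - s ^ 2 ->
  Rabs (a' - a) <= d -> Rabs (b' - b) <= d -> Rabs (s' - s) <= d -> d <= m / 4 ->
  0 < 1 - s' ^ 2 /\ Rabs (gram_ratio a' b' s' - gram_ratio a b s) <= 36 * d / m ^ 2.
Proof.
intros Ha Hb Hs Ha' Hb' Hs' Hm Hms Hda Hdb Hds Hdm.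
apply ratio_perturb; auto.
- replace (a ^ 2 + b ^ 2 - 2 * s * a * b) with (a * a + b * b + (-2) * (s * a * b)) by ring.
  eapply Rle_trans; [apply Rabs_triang3|].
  assert (Rabs (a * a) <= 1 * 1) by (apply Rabs_mult_le; auto).
  assert (Rabs (b * b) <= 1 * 1) by (apply Rabs_mult_le; auto).
  assert (Rabs ((-2) * (s * a * b)) <= 2 * (1 * 1 * 1)).
  { apply Rabs_mult_le; [rewrite Rabs_left; lra|]; repeat apply Rabs_mult_le; auto. }
  lra.
- apply gram_numerator_perturb; auto.
- split; [lra|]; pose proof (pow2_ge_0 s); lra.
- replace (1 - s' ^ 2 - (1 - s ^ 2)) with (- ((s' - s) * (s' + s))) by ring.
  rewrite Rabs_Ropp, (Rmult_comm 2); apply Rabs_mult_le; auto.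
  eapply Rle_trans; [apply Rabs_triang | lra].
Qed.

Lemma eta_rel_near_limit M t1 t2 th e a b s d m : (1 <= M)%nat -> eta_rel M t1 t2 th e ->
  Rabs a <= 1 -> Rabs b <= 1 -> Rabs s <= 1 -> 0 < m -> m <= 1 - s ^ 2 ->
  Rabs (dirichlet M (th - t1) - a) <= d -> Rabs (dirichlet M (th - t2) - b) <= d ->
  Rabs (dirichlet M (t2 - t1) - s) <= d -> d <= m / 4 ->
  Rabs (e - (1 - gram_ratio a b s)) <= 36 * d / m ^ 2.
Proof.
intros HM He Ha Hb Hs Hm Hms H1 H2 H3 Hd.
destruct (gram_ratio_perturb a b s _ _ _ d m Ha Hb Hs
  (dirichlet_bound _ _ HM) (dirichlet_bound _ _ HM) (dirichlet_bound _ _ HM)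
  Hm Hms H1 H2 H3 Hd) as [Hp Hf].
replace (e - (1 - gram_ratio a b s)) with
  (- (gram_ratio (dirichlet M (th - t1)) (dirichlet M (th - t2)) (dirichlet M (t2 - t1))
      - gram_ratio a b s)).
- rewrite Rabs_Ropp; exact Hf.
- pose proof (eta_rel_dirichlet M t1 t2 th e HM He) as EF.
  unfold gram_ratio; rewrite <- EF; field; lra.
Qed.

(** * A vector orthogonal to both steering vectors *)

Definition Copp (u : Defs.C) : Defs.C := (- fst u, - snd u).
Definition cexp (a : R) : Defs.C := (cos a, sin a).
Definition Cnorm2 (u : Defs.C) := fst u ^ 2 + snd u ^ 2.

Lemma C_ring_theory : ring_theory C0 C1 Cadd Cmul Csub Copp (@eq Defs.C).
Proof.
constructor; intros; apply C_eq; destruct x; try destruct y; try destruct z;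
  unfold Cadd, Cmul, Csub, Copp, C0, C1; simpl; ring.
Qed.
Add Ring C_ring : C_ring_theory.

Lemma Cconj_mul a b : Cconj (Cmul a b) = Cmul (Cconj a) (Cconj b).
Proof. apply C_eq; destruct a, b; unfold Cconj, Cmul; simpl; ring. Qed.

Lemma Cconj_involutive a : Cconj (Cconj a) = a.
Proof. apply C_eq; destruct a; unfold Cconj; simpl; ring. Qed.

Lemma cexp_conj a : Cconj (cexp a) = cexp (- a).
Proof. apply C_eq; unfold Cconj, cexp; simpl; [rewrite cos_neg | rewrite sin_neg]; ring. Qed.

Lemma cexp_add a b : Cmul (cexp a) (cexp b) = cexp (a + b).
Proof. apply C_eq; unfold Cmul, cexp; simpl; [rewrite cos_plus | rewrite sin_plus]; ring. Qed.

Lemma cexp_0 : cexp 0 = C1.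
Proof. unfold cexp, C1; rewrite cos_0, sin_0; reflexivity. Qed.

Lemma Cnorm2_mul u v : Cnorm2 (Cmul u v) = Cnorm2 u * Cnorm2 v.
Proof. destruct u, v; unfold Cnorm2, Cmul; simpl; ring. Qed.

Lemma Cnorm2_conj u : Cnorm2 (Cconj u) = Cnorm2 u.
Proof. destruct u; unfold Cnorm2, Cconj; simpl; ring. Qed.

Lemma Cnorm2_cexp a : Cnorm2 (cexp a) = 1.
Proof. unfold Cnorm2, cexp; simpl; pose proof (sin2_cos2 a); unfold Rsqr in *; nra. Qed.

Lemma Cnorm2_one_minus_cexp a : Cnorm2 (Csub C1 (cexp a)) = 2 - 2 * cos a.
Proof. unfold Cnorm2, Csub, C1, cexp; simpl; pose proof (sin2_cos2 a); unfold Rsqr in *; nra. Qed.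

Lemma Cnorm2_cexp_sum a b : Cnorm2 (Cadd (cexp a) (cexp b)) <= 4.
Proof.
unfold Cnorm2, Cadd, cexp; simpl; pose proof (sin2_cos2 a); pose proof (sin2_cos2 b).
pose proof (pow2_ge_0 (cos a - cos b)); pose proof (pow2_ge_0 (sin a - sin b)).
unfold Rsqr in *; nra.
Qed.

Lemma Cconj_mul_self u : Cmul (Cconj u) u = (Cnorm2 u, 0).
Proof. destruct u; unfold Cconj, Cmul, Cnorm2; simpl; f_equal; ring. Qed.

Lemma csum_app f a b : csum f (a + b) = Cadd (csum f a) (csum (fun k => f (a + k)%nat) b).
Proof.
induction b as [|b IH]; simpl.
- rewrite Nat.add_0_r; apply C_eq; simpl; ring.
- rewrite Nat.add_succ_r; simpl; rewrite IH; ring.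
Qed.

Lemma csum_scal z f n : csum (fun k => Cmul z (f k)) n = Cmul z (csum f n).
Proof.
induction n as [|n IH]; simpl; [|rewrite IH; ring].
apply C_eq; destruct z; unfold C0, Cmul; simpl; ring.
Qed.

Lemma csum_zero f n : (forall k, (k < n)%nat -> f k = C0) -> csum f n = C0.
Proof. intros H; induction n as [|n IH]; simpl; auto; rewrite IH, H by (auto; lia); ring. Qed.

Lemma csum_const a n : csum (fun _ => a) n = Cmul (INR n, 0) a.
Proof.
induction n as [|n IH]; simpl csum; rewrite ?IH, ?S_INR; apply C_eq;
  unfold Cmul, Cadd, C0; cbn [fst snd INR]; ring.
Qed.

Lemma csum_blocks f b m :
  csum f (b * m) = csum (fun l => csum (fun k => f (l * m + k)%nat) m) b.
Proof.
induction b as [|b IH]; [reflexivity|].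
rewrite Nat.mul_succ_l, csum_app, IH; reflexivity.
Qed.

Lemma steer_cexp M x j : steer M x j = Cmul (/ sqrt (INR M), 0) (cexp (INR j * x)).
Proof. apply C_eq; unfold steer, cexp, Cmul; simpl; unfold Rdiv; ring. Qed.

Definition block_vec (m : nat) (th : R) (g : nat -> Defs.C) (j : nat) : Defs.C :=
  if (j <? 3 * m)%nat then Cmul (Cconj (g (j / m)%nat)) (cexp (INR j * th)) else C0.

Section BlockVector.
Variables (M m : nat) (th : R) (g : nat -> Defs.C).
Hypothesis Hm : (3 * m <= M)%nat.

Lemma cinner_block_vec (f : nat -> nat -> Defs.C) v :
  (forall l k, (l < 3)%nat -> (k < m)%nat ->
     Cmul (Cconj (Cmul (Cconj (g l)) (cexp (INR (l * m + k) * th)))) (v (l * m + k)%nat)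
     = f l k) ->
  cinner M (block_vec m th g) v = csum (fun l => csum (f l) m) 3.
Proof.
intros Hf; unfold cinner.
replace M with (3 * m + (M - 3 * m))%nat by lia; rewrite csum_app, csum_blocks.
rewrite (csum_zero (fun k => Cmul (Cconj (block_vec m th g (3 * m + k))) (v (3 * m + k)%nat))).
2:{ intros k _; unfold block_vec.
    replace (3 * m + k <? 3 * m)%nat with false by (symmetry; apply Nat.ltb_ge; lia).
    apply C_eq; unfold Cconj, Cmul, C0; simpl; ring. }
replace (Cadd _ C0) with (csum (fun l => csum (fun k =>
  Cmul (Cconj (block_vec m th g (l * m + k))) (v (l * m + k)%nat)) m) 3) by ring.
apply csum_ext; intros l Hl; apply csum_ext; intros k Hk; rewrite <- Hf by auto.
unfold block_vec.
replace (l * m + k <? 3 * m)%nat with true by (symmetry; apply Nat.ltb_lt; nia).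
rewrite Nat.div_add_l, Nat.div_small, Nat.add_0_r by lia; reflexivity.
Qed.

Lemma cinner_block_vec_steer x :
  cinner M (block_vec m th g) (steer M x) =
  Cmul (/ sqrt (INR M), 0)
    (Cmul (csum (fun l => Cmul (g l) (cexp (INR l * (INR m * (x - th))))) 3)
          (csum (fun k => cexp (INR k * (x - th))) m)).
Proof.
rewrite (cinner_block_vec (fun l k => Cmul (Cmul (/ sqrt (INR M), 0)
  (Cmul (g l) (cexp (INR l * (INR m * (x - th)))))) (cexp (INR k * (x - th))))).
- cbn [csum]; rewrite !csum_scal; ring.
- intros l k _ _.
  rewrite steer_cexp, Cconj_mul, Cconj_involutive, cexp_conj.
  transitivity (Cmul (Cmul (/ sqrt (INR M), 0) (g l))
    (Cmul (cexp (- (INR (l * m + k) * th))) (cexp (INR (l * m + k) * x)))); [ring|].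
  rewrite !cexp_add, plus_INR, mult_INR.
  replace (- ((INR l * INR m + INR k) * th) + (INR l * INR m + INR k) * x)
    with (INR l * (INR m * (x - th)) + INR k * (x - th)) by ring.
  rewrite <- cexp_add; ring.
Qed.

Lemma block_vec_norm2 :
  fst (cinner M (block_vec m th g) (block_vec m th g)) =
  INR m * (Cnorm2 (g 0%nat) + Cnorm2 (g 1%nat) + Cnorm2 (g 2%nat)).
Proof.
rewrite (cinner_block_vec (fun l _ => (Cnorm2 (g l), 0))).
- simpl csum; rewrite !csum_const; unfold Cadd, Cmul, C0; simpl; ring.
- intros l k Hl Hk; unfold block_vec.
  replace (l * m + k <? 3 * m)%nat with true by (symmetry; apply Nat.ltb_lt; nia).
  rewrite Nat.div_add_l, Nat.div_small, Nat.add_0_r, Cconj_mul_self, Cnorm2_mul,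
    Cnorm2_conj, Cnorm2_cexp, Rmult_1_r by lia; reflexivity.
Qed.

End BlockVector.

(* The coefficients of [(X - z1) (X - z2)]. *)
Definition annihilator_coef (z1 z2 : Defs.C) (l : nat) : Defs.C :=
  match l with O => Cmul z1 z2 | 1%nat => Copp (Cadd z1 z2) | _ => C1 end.

Lemma annihilator_coef_eval z1 z2 y :
  csum (fun l => Cmul (annihilator_coef z1 z2 l) (cexp (INR l * y))) 3 =
  Cmul (Csub (cexp y) z1) (Csub (cexp y) z2).
Proof.
cbn [csum annihilator_coef INR]; rewrite Rmult_0_l, Rmult_1_l, Rmult_plus_distr_r, Rmult_1_l.
rewrite <- cexp_add, cexp_0; ring.
Qed.

Lemma annihilator_coef_norm2 a b :
  Cnorm2 (annihilator_coef (cexp a) (cexp b) 0) + Cnorm2 (annihilator_coef (cexp a) (cexp b) 1)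
  + Cnorm2 (annihilator_coef (cexp a) (cexp b) 2) <= 6.
Proof.
cbn [annihilator_coef]; rewrite Cnorm2_mul, !Cnorm2_cexp.
replace (Cnorm2 (Copp (Cadd (cexp a) (cexp b)))) with (Cnorm2 (Cadd (cexp a) (cexp b)))
  by (unfold Cnorm2, Copp; simpl; ring).
pose proof (Cnorm2_cexp_sum a b).
replace (Cnorm2 C1) with 1 by (unfold Cnorm2, C1; simpl; ring); lra.
Qed.

Section Annihilator.
Variables (M m : nat) (th th1 th2 : R).
Hypotheses (Hm1 : (1 <= m)%nat) (Hm3 : (3 * m <= M)%nat).

(* [w] annihilates [a(th1)] and [a(th2)] because [e^(i m (th_j - th))] are the roots of
   [(X - z1) (X - z2)]. *)
Let z1 := cexp (INR m * (th1 - th)).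
Let z2 := cexp (INR m * (th2 - th)).
Let w := block_vec m th (annihilator_coef z1 z2).

Lemma annihilator_orthogonal th' : th' = th1 \/ th' = th2 -> cinner M w (steer M th') = C0.
Proof.
intros Hth'; unfold w; rewrite cinner_block_vec_steer, annihilator_coef_eval by auto.
destruct Hth' as [->| ->]; fold z1 z2; ring.
Qed.

Lemma annihilator_steer_norm2 :
  Cnorm2 (cinner M w (steer M th)) =
  INR m ^ 2 / INR M * (2 - 2 * cos (INR m * (th1 - th))) * (2 - 2 * cos (INR m * (th2 - th))).
Proof.
unfold w; rewrite cinner_block_vec_steer, annihilator_coef_eval by auto.
rewrite Rminus_diag, Rmult_0_r, cexp_0.
rewrite (csum_ext _ (fun _ => C1)) by (intros; rewrite Rmult_0_r; apply cexp_0).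
rewrite csum_const, !Cnorm2_mul; unfold z1, z2; rewrite !Cnorm2_one_minus_cexp.
assert (HM : 0 < INR M) by (apply lt_0_INR; lia).
replace (Cnorm2 (/ sqrt (INR M), 0)) with (/ INR M)
  by (unfold Cnorm2; simpl; rewrite Rmult_1_r, <- Rinv_mult, sqrt_sqrt by lra; ring).
unfold Cnorm2, C1; simpl; field; lra.
Qed.

Lemma annihilator_norm2 : 0 < fst (cinner M w w) <= 6 * INR m.
Proof.
unfold w; rewrite block_vec_norm2 by auto.
assert (0 < INR m) by (apply lt_0_INR; lia).
pose proof (annihilator_coef_norm2 (INR m * (th1 - th)) (INR m * (th2 - th))) as H6.
fold z1 z2 in H6.
assert (Cnorm2 (annihilator_coef z1 z2 2) = 1) by (unfold Cnorm2, C1; simpl; ring).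
assert (0 <= Cnorm2 (annihilator_coef z1 z2 0)) by (unfold Cnorm2; nra).
assert (0 <= Cnorm2 (annihilator_coef z1 z2 1)) by (unfold Cnorm2; nra).
split; nra.
Qed.

Lemma eta_rel_lower_bound e : eta_rel M th1 th2 th e ->
  INR m / INR M * (2 - 2 * cos (INR m * (th1 - th))) * (2 - 2 * cos (INR m * (th2 - th)))
  <= 6 * e.
Proof.
intros He; assert (Hmr : 0 < INR m) by (apply lt_0_INR; lia).
destruct annihilator_norm2 as [Hw0 Hw6].
pose proof (eta_rel_test_bound M th1 th2 th e w He (annihilator_orthogonal th1 (or_introl eq_refl))
  (annihilator_orthogonal th2 (or_intror eq_refl)) Hw0) as T.
fold (Cnorm2 (cinner M w (steer M th))) in T; rewrite annihilator_steer_norm2 in T.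
pose proof (eta_rel_nonneg _ _ _ _ _ He).
apply (Rmult_le_reg_l (INR m)); auto.
replace (INR m * (INR m / INR M * (2 - 2 * cos (INR m * (th1 - th)))
                  * (2 - 2 * cos (INR m * (th2 - th)))))
  with (INR m ^ 2 / INR M * (2 - 2 * cos (INR m * (th1 - th)))
        * (2 - 2 * cos (INR m * (th2 - th)))) by (unfold Rdiv; ring).
nra.
Qed.

End Annihilator.

Lemma Rabs_sin_add_IZR_PI x j : Rabs (sin (x + IZR j * PI)) = Rabs (sin x).
Proof.
assert (S0 : sin (IZR j * PI) = 0) by (apply sin_eq_0_1; exists j; reflexivity).
pose proof (sin2_cos2 (IZR j * PI)) as SC; rewrite S0 in SC; unfold Rsqr in SC.
rewrite sin_plus, S0, Rmult_0_r, Rplus_0_r, Rabs_mult.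
assert (Hc : cos (IZR j * PI) = 1 \/ cos (IZR j * PI) = -1) by nra.
destruct Hc as [-> | ->]; [rewrite Rabs_R1 | rewrite (Rabs_left (-1)) by lra]; ring.
Qed.

Lemma sin_half_ge d : 0 <= d -> d <= PI -> d / 6 <= sin (d / 2).
Proof.
intros H0 H1; pose proof PI_4.
pose proof (sin_ge_cubic (d / 2) ltac:(lra) ltac:(lra)).
assert ((d / 2) ^ 3 <= (d / 2) * 4) by (assert ((d / 2) ^ 2 <= 4) by nra; nra); lra.
Qed.

Lemma dist2pi_le_Rabs_sin x y : dist2pi x y / 6 <= Rabs (sin ((x - y) / 2)).
Proof.
unfold dist2pi; cbv zeta.
set (t := x - y); set (j := Int_part (t / (2 * PI))); set (r := t - 2 * PI * IZR j).
pose proof PI_RGT_0 as HP.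
destruct (base_Int_part (t / (2 * PI))) as [B1 B2]; fold j in B1, B2.
assert (Hr : 0 <= r < 2 * PI).
{ assert (Ht : t = 2 * PI * (t / (2 * PI))) by (field; lra).
  unfold r; rewrite Ht; unfold Rdiv in B2 |- *; split; nra. }
replace (t / 2) with (r / 2 + IZR j * PI) by (unfold r; field).
rewrite Rabs_sin_add_IZR_PI, Rabs_right by (apply Rle_ge, sin_ge_0; lra).
unfold Rmin; destruct (Rle_dec r (2 * PI - r)); [apply sin_half_ge; lra|].
replace (sin (r / 2)) with (sin ((2 * PI - r) / 2)); [apply sin_half_ge; lra|].
replace ((2 * PI - r) / 2) with (PI - r / 2) by field; apply sin_PI_x.
Qed.

Lemma dirichlet_le_inv M t X : (1 <= M)%nat -> 0 < X -> X <= INR M * Rabs (sin (t / 2)) ->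
  Rabs (dirichlet M t) <= / X.
Proof.
intros HM HX H; assert (HM0 : 0 < INR M) by (apply lt_0_INR; lia).
assert (Hb : Rabs (INR M * sin (t / 2) * dirichlet M t) <= 1)
  by (rewrite dirichlet_closed_form; apply Rabs_le, SIN_bound).
rewrite !Rabs_mult, (Rabs_right (INR M)) in Hb by lra.
apply (Rmult_le_reg_l X); auto; rewrite Rinv_r by lra.
pose proof (Rabs_pos (dirichlet M t)); nra.
Qed.

Lemma cos_lt_1 u : 0 < Rabs u -> Rabs u < 2 * PI -> cos u < 1.
Proof.
intros H1 H2; replace u with (2 * (u / 2)) by field; rewrite cos_2a_sin.
assert (sin (u / 2) <> 0).
{ destruct (Rle_or_lt 0 u).
  - rewrite Rabs_right in * by lra; apply Rgt_not_eq, sin_gt_0; lra.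
  - rewrite Rabs_left in * by lra; replace (u / 2) with (- (- u / 2)) by field.
    rewrite sin_neg; apply Ropp_neq_0_compat, Rgt_not_eq, sin_gt_0; lra. }
assert (0 < sin (u / 2) * sin (u / 2)) by (apply Rsqr_pos_lt; auto); lra.
Qed.

Definition eventually (P : nat -> Prop) := exists N0, forall N, (N0 <= N)%nat -> P N.

Lemma eventually_mono (P Q : nat -> Prop) :
  (forall N, P N -> Q N) -> eventually P -> eventually Q.
Proof. intros H [N0 H0]; exists N0; auto. Qed.

Lemma eventually_INR_ge x : eventually (fun N => x <= INR N).
Proof.
destruct (INR_unbounded x) as [N0 H0]; exists N0; intros N HN.
pose proof (le_INR _ _ HN); lra.
Qed.

Lemma eventually_INR_mult_ge x y : 0 < y -> eventually (fun N => x <= y * INR N).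
Proof.
intros Hy; destruct (eventually_INR_ge (x / y)) as [N0 H0]; exists N0; intros N HN.
specialize (H0 N HN); apply (Rmult_le_compat_l y) in H0; [|lra].
replace (y * (x / y)) with x in H0 by (field; lra); exact H0.
Qed.

Lemma Un_cv_eventually (u : nat -> R) l :
  (forall eps, 0 < eps -> eventually (fun N => Rabs (u N - l) <= eps)) -> Un_cv u l.
Proof.
intros H eps He; destruct (H (eps / 2) ltac:(lra)) as [N0 HN]; exists N0.
intros n Hn; unfold Rdist; specialize (HN n Hn); lra.
Qed.

Lemma Un_cv_eventually_close (u : nat -> R) l : Un_cv u l ->
  forall eps, 0 < eps -> eventually (fun N => Rabs (u N - l) <= eps).
Proof. intros H eps He; destruct (H eps He) as [N0 HN]; exists N0; intros; left; apply HN; lia. Qed.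

Lemma Un_cv_const a : Un_cv (fun _ => a) a.
Proof. intros eps He; exists O; intros; unfold Rdist; rewrite Rminus_diag, Rabs_R0; lra. Qed.

Lemma Un_cv_le_eventually (a b : nat -> R) A B : Un_cv a A -> Un_cv b B ->
  eventually (fun N => b N <= a N) -> B <= A.
Proof.
intros Ha Hb [N0 H]; destruct (Rle_or_lt B A) as [|Hlt]; auto; exfalso.
destruct (Ha ((B - A) / 2) ltac:(lra)) as [N1 H1].
destruct (Hb ((B - A) / 2) ltac:(lra)) as [N2 H2].
set (N := max N0 (max N1 N2)).
specialize (H N ltac:(unfold N; lia)); specialize (H1 N ltac:(unfold N; lia)).
specialize (H2 N ltac:(unfold N; lia)); unfold Rdist in *.
apply Rabs_def2 in H1; apply Rabs_def2 in H2; lra.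
Qed.

(** * Asymptotics of the Dirichlet kernel *)

Section Asymptotics.
Variables (c : R) (Mf : nat -> nat).
Hypotheses (hc : 0 < c) (hM2 : forall N, (2 <= Mf N)%nat)
  (hMc : Un_cv (fun N => INR (Mf N) / INR N) c).

Lemma Mf_ge_1 N : (1 <= Mf N)%nat.
Proof. specialize (hM2 N); lia. Qed.

Lemma Mf_ratio_bounds :
  eventually (fun N => 1 <= INR N /\ c / 2 <= INR (Mf N) / INR N <= 3 * c / 2).
Proof.
destruct (eventually_INR_ge 1) as [N1 H1].
destruct (Un_cv_eventually_close _ _ hMc (c / 2) ltac:(lra)) as [N2 H2].
exists (max N1 N2); intros N HN; specialize (H1 N ltac:(lia)).
specialize (H2 N ltac:(lia)); apply Rabs_le_inv in H2; split; [|split]; lra.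
Qed.

Lemma Mf_unbounded Y : eventually (fun N => Y <= INR (Mf N)).
Proof.
destruct Mf_ratio_bounds as [N1 H1].
destruct (eventually_INR_mult_ge Y (c / 2) ltac:(lra)) as [N2 H2].
exists (max N1 N2); intros N HN; destruct (H1 N ltac:(lia)) as [HN1 [Hc _]].
specialize (H2 N ltac:(lia)).
replace (INR (Mf N)) with (INR (Mf N) / INR N * INR N) by (field; lra); nra.
Qed.

Lemma dirichlet_sinc_uniform R eps : 0 <= R -> 0 < eps -> eventually (fun N =>
  forall x, Rabs x <= R -> Rabs (dirichlet (Mf N) (x / INR N) - sinc (x * c / 2)) <= eps).
Proof.
intros HR He.
destruct (Un_cv_eventually_close _ _ hMc (eps / (R + 1)) ltac:(apply Rdiv_lt_0_compat; lra))
  as [N1 H1].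
destruct (eventually_INR_mult_ge (R + 1) eps He) as [N2 H2].
destruct (eventually_INR_ge (R + 1)) as [N3 H3].
exists (max N1 (max N2 N3)); intros N HN x Hx.
specialize (H1 N ltac:(lia)); specialize (H2 N ltac:(lia)); specialize (H3 N ltac:(lia)).
assert (HM1 := Mf_ge_1 N); assert (HMr : 0 < INR (Mf N)) by (apply lt_0_INR; lia).
set (u := INR (Mf N) * x / (2 * INR N)).
assert (Hu : Rabs u <= INR (Mf N)).
{ unfold u, Rdiv; rewrite !Rabs_mult, Rabs_inv, (Rabs_right (INR (Mf N))),
    (Rabs_right (2 * INR N)) by lra.
  apply Rdiv_le_of_le_mult; [lra|]; pose proof (Rabs_pos (INR (Mf N))); nra. }
pose proof (dirichlet_sinc_approx (Mf N) u HM1 Hu) as A1.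
replace (2 * u / INR (Mf N)) with (x / INR N) in A1 by (unfold u; field; lra).
replace (u / INR (Mf N)) with (x / (2 * INR N)) in A1 by (unfold u; field; lra).
assert (A2 : (x / (2 * INR N)) ^ 2 / 6 <= eps / 2).
{ pose proof (sq_div_le x (2 * INR N) ltac:(lra) ltac:(lra)).
  assert (Rabs x / (2 * INR N) <= eps) by (apply Rdiv_le_of_le_mult; lra); lra. }
pose proof (sinc_lipschitz u (x * c / 2)) as A3.
replace (u - x * c / 2) with (x / 2 * (INR (Mf N) / INR N - c)) in A3 by (unfold u; field; lra).
assert (A4 : Rabs (x / 2 * (INR (Mf N) / INR N - c)) <= (R / 2) * (eps / (R + 1))).
{ apply Rabs_mult_le; [|lra]; unfold Rdiv; rewrite Rabs_mult, (Rabs_right (/ 2)) by lra; lra. }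
assert (A5 : R / 2 * (eps / (R + 1)) <= eps / 2).
{ replace (R / 2 * (eps / (R + 1))) with (eps / 2 * (R / (R + 1))) by (field; lra).
  rewrite <- (Rmult_1_r (eps / 2)) at 2; apply Rmult_le_compat_l; [lra|].
  apply Rdiv_le_of_le_mult; lra. }
replace (dirichlet (Mf N) (x / INR N) - sinc (x * c / 2)) with
  ((dirichlet (Mf N) (x / INR N) - sinc u) + (sinc u - sinc (x * c / 2))) by ring.
eapply Rle_trans; [apply Rabs_triang | lra].
Qed.

Lemma Mf_sin_unbounded (psi th : nat -> R) :
  (forall B, eventually (fun N => B <= INR N * dist2pi (psi N) (th N))) ->
  forall B, eventually (fun N => B <= INR (Mf N) * Rabs (sin ((psi N - th N) / 2))).
Proof.
intros Hdist B; destruct Mf_ratio_bounds as [N1 H1].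
destruct (Hdist (12 * Rabs B / c)) as [N2 H2].
exists (max N1 N2); intros N HN; destruct (H1 N ltac:(lia)) as [HN1 [Hc _]].
specialize (H2 N ltac:(lia)); pose proof (dist2pi_le_Rabs_sin (psi N) (th N)) as S.
set (d := dist2pi (psi N) (th N)) in *.
assert (H12 : 12 * Rabs B <= c * (INR N * d))
  by (apply Rmult_le_compat_l with (r := c) in H2; [|lra];
      replace (c * (12 * Rabs B / c)) with (12 * Rabs B) in H2 by (field; lra); lra).
assert (INR (Mf N) * (d / 6) <= INR (Mf N) * Rabs (sin ((psi N - th N) / 2)))
  by (apply Rmult_le_compat_l; [apply pos_INR | lra]).
replace (INR (Mf N) * (d / 6)) with (INR (Mf N) / INR N * (INR N * d) / 6) in H by (field; lra).
pose proof (Rle_abs B); pose proof (Rabs_pos B); nra.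
Qed.

Lemma Mf_sin_shift_unbounded (t : nat -> R) a :
  (forall B, eventually (fun N => B <= INR (Mf N) * Rabs (sin (t N / 2)))) ->
  forall B, eventually (fun N => B <= INR (Mf N) * Rabs (sin ((t N - a / INR N) / 2))).
Proof.
intros Ht B; destruct Mf_ratio_bounds as [N1 H1].
destruct (Ht (B + 3 * c * Rabs a / 4)) as [N2 H2].
exists (max N1 N2); intros N HN; destruct (H1 N ltac:(lia)) as [HN1 [_ Hc]].
specialize (H2 N ltac:(lia)).
pose proof (sin_lipschitz (t N / 2) ((t N - a / INR N) / 2)) as L.
replace (t N / 2 - (t N - a / INR N) / 2) with (a / (2 * INR N)) in L by (field; lra).
pose proof (Rabs_triang_inv (sin (t N / 2)) (sin ((t N - a / INR N) / 2))).
assert (HL : INR (Mf N) * Rabs (a / (2 * INR N)) <= 3 * c * Rabs a / 4).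
{ replace (INR (Mf N) * Rabs (a / (2 * INR N))) with (INR (Mf N) / INR N * Rabs a / 2).
  - pose proof (Rabs_pos a); nra.
  - unfold Rdiv; rewrite Rabs_mult, Rabs_inv, (Rabs_right (2 * INR N)) by lra; field; lra. }
pose proof (pos_INR (Mf N)); nra.
Qed.

Lemma dirichlet_vanishes (t : nat -> R) :
  (forall B, eventually (fun N => B <= INR (Mf N) * Rabs (sin (t N / 2)))) ->
  forall d, 0 < d -> eventually (fun N => Rabs (dirichlet (Mf N) (t N)) <= d).
Proof.
intros Ht d Hd; generalize (Ht (/ d)); apply eventually_mono; intros N H.
rewrite <- (Rinv_inv d); apply dirichlet_le_inv; auto using Mf_ge_1.
apply Rinv_0_lt_compat; lra.
Qed.

End Asymptotics.

Lemma floor_div_bounds n K : (0 < K)%nat ->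
  INR K * INR (n / K) <= INR n < INR K * INR (n / K) + INR K.
Proof.
intros HK; pose proof (Nat.div_mod_eq n K) as E.
pose proof (Nat.mod_upper_bound n K ltac:(lia)) as U.
assert (E' : INR n = INR K * INR (n / K) + INR (n mod K))
  by (rewrite <- mult_INR, <- plus_INR; f_equal; exact E).
rewrite E'; apply lt_INR in U; pose proof (pos_INR (n mod K)); lra.
Qed.

Section FloorRatios.
Variables (c : R) (Mf : nat -> nat) (K : nat).
Hypotheses (hc : 0 < c) (hM2 : forall N, (2 <= Mf N)%nat)
  (hMc : Un_cv (fun N => INR (Mf N) / INR N) c) (hK : (1 <= K)%nat).

Lemma Mf_div_ratio_cv : Un_cv (fun N => INR (Mf N / K) / INR N) (c / INR K).
Proof.
assert (HK : 1 <= INR K) by (apply (le_INR 1); auto).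
apply Un_cv_eventually; intros eps He.
destruct (Mf_ratio_bounds c Mf hc hMc) as [N1 H1].
destruct (Un_cv_eventually_close _ _ hMc (INR K * eps / 2) ltac:(nra)) as [N2 H2].
destruct (eventually_INR_mult_ge 2 eps He) as [N3 H3].
exists (max N1 (max N2 N3)); intros N HN; destruct (H1 N ltac:(lia)) as [HN1 _].
specialize (H2 N ltac:(lia)); specialize (H3 N ltac:(lia)).
destruct (floor_div_bounds (Mf N) K ltac:(lia)) as [D1 D2].
replace (INR (Mf N / K) / INR N - c / INR K) with
  ((INR (Mf N / K) * INR K - INR (Mf N)) / (INR K * INR N)
   + (INR (Mf N) / INR N - c) / INR K) by (field; lra).
eapply Rle_trans; [apply Rabs_triang|].
assert (Rabs ((INR (Mf N / K) * INR K - INR (Mf N)) / (INR K * INR N)) <= eps / 2).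
{ unfold Rdiv; rewrite Rabs_mult, Rabs_inv, (Rabs_right (INR K * INR N)) by nra.
  apply Rdiv_le_of_le_mult; [nra|]; apply Rabs_le; nra. }
assert (Rabs ((INR (Mf N) / INR N - c) / INR K) <= eps / 2).
{ unfold Rdiv at 1; rewrite Rabs_mult, Rabs_inv, (Rabs_right (INR K)) by lra.
  apply Rdiv_le_of_le_mult; lra. }
lra.
Qed.

Lemma Mf_div_Mf_cv : Un_cv (fun N => INR (Mf N / K) / INR (Mf N)) (/ INR K).
Proof.
assert (HK : 1 <= INR K) by (apply (le_INR 1); auto).
apply Un_cv_eventually; intros eps He.
generalize (Mf_unbounded c Mf hc hMc (/ eps)); apply eventually_mono; intros N HN.
assert (HMr : 1 <= INR (Mf N)) by (apply (le_INR 1), (Mf_ge_1 Mf hM2)).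
destruct (floor_div_bounds (Mf N) K ltac:(lia)) as [D1 D2].
replace (INR (Mf N / K) / INR (Mf N) - / INR K)
  with ((INR (Mf N / K) * INR K - INR (Mf N)) / (INR K * INR (Mf N))) by (field; lra).
unfold Rdiv; rewrite Rabs_mult, Rabs_inv, (Rabs_right (INR K * INR (Mf N))) by nra.
apply Rdiv_le_of_le_mult; [nra|].
assert (1 <= eps * INR (Mf N))
  by (apply (Rmult_le_compat_l eps) in HN; [rewrite Rinv_r in HN|]; lra).
apply Rabs_le; nra.
Qed.

End FloorRatios.

Lemma tolerance_choice m eps : 0 < m -> 0 < eps ->
  exists d, 0 < d /\ d <= m / 4 /\ 36 * d / m ^ 2 <= eps.
Proof.
intros Hm He; exists (Rmin (m / 4) (eps * m ^ 2 / 36)).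
assert (Hm2 : 0 < m ^ 2) by (apply pow_lt; lra).
split; [apply Rmin_pos; [lra | apply Rdiv_lt_0_compat; [nra | lra]]|].
split; [apply Rmin_l|].
apply Rdiv_le_of_le_mult; auto.
pose proof (Rmin_r (m / 4) (eps * m ^ 2 / 36)); lra.
Qed.

Section Main.
Variables (c : R) (Mf : nat -> nat) (alpha : R) (th1 : nat -> R) (eta : nat -> R -> R).
Hypotheses (hc : 0 < c) (hM2 : forall N, (2 <= Mf N)%nat)
  (hMc : Un_cv (fun N => INR (Mf N) / INR N) c) (halpha : 0 < alpha)
  (heta : forall N theta,
     eta_rel (Mf N) (th1 N) (th1 N + alpha / INR N) theta (eta N theta)).

Let s0 := sinc (alpha * c / 2).

Lemma sinc_gap_pos : 0 < 1 - s0 ^ 2.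
Proof.
pose proof (sinc_lt_1 (alpha * c / 2) ltac:(nra)) as H; fold s0 in H.
pose proof (Rabs_pos s0); rewrite <- pow2_abs; nra.
Qed.

Lemma eta_uniform_on_ball R eps : 0 <= R -> 0 < eps -> eventually (fun N =>
  forall beta, Rabs beta <= R ->
  Rabs (eta N (th1 N + beta / INR N) - (1 - kappa c alpha beta)) <= eps).
Proof.
intros HR He; pose proof sinc_gap_pos as Hm.
destruct (tolerance_choice _ _ Hm He) as [d [Hd0 [Hd1 Hd2]]].
generalize (dirichlet_sinc_uniform c Mf hM2 hMc (R + alpha) d ltac:(lra) Hd0).
apply eventually_mono; intros N HN beta Hb.
eapply Rle_trans; [|exact Hd2].
change (kappa c alpha beta) with
  (gram_ratio (sinc (beta * c / 2)) (sinc ((beta - alpha) * c / 2)) s0).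
apply (eta_rel_near_limit (Mf N) (th1 N) (th1 N + alpha / INR N) (th1 N + beta / INR N));
  auto using Mf_ge_1; try apply sinc_bound; try lra.
- replace (th1 N + beta / INR N - th1 N) with (beta / INR N) by ring; apply HN; lra.
- replace (th1 N + beta / INR N - (th1 N + alpha / INR N)) with ((beta - alpha) / INR N)
    by (unfold Rdiv; ring).
  apply HN; eapply Rle_trans; [apply Rabs_triang|].
  rewrite Rabs_Ropp, (Rabs_right alpha); lra.
- replace (th1 N + alpha / INR N - th1 N) with (alpha / INR N) by ring.
  apply HN; rewrite Rabs_right; lra.
Qed.

Lemma eta_far_cv_1 (psi : nat -> R) :
  (forall B, eventually (fun N => B <= INR N * dist2pi (psi N) (th1 N))) ->
  Un_cv (fun N => eta N (psi N)) 1.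
Proof.
intros Hdist; apply Un_cv_eventually; intros eps He; pose proof sinc_gap_pos as Hm.
destruct (tolerance_choice _ _ Hm He) as [d [Hd0 [Hd1 Hd2]]].
pose proof (Mf_sin_unbounded c Mf hc hMc psi th1 Hdist) as Hfar1.
pose proof (Mf_sin_shift_unbounded c Mf hc hMc _ alpha Hfar1) as Hfar2.
destruct (dirichlet_vanishes Mf hM2 _ Hfar1 d Hd0) as [N1 H1].
destruct (dirichlet_vanishes Mf hM2 _ Hfar2 d Hd0) as [N2 H2].
destruct (dirichlet_sinc_uniform c Mf hM2 hMc alpha d ltac:(lra) Hd0) as [N3 H3].
exists (max N1 (max N2 N3)); intros N HN.
specialize (H1 N ltac:(lia)); specialize (H2 N ltac:(lia)); specialize (H3 N ltac:(lia)).
replace (psi N - th1 N - alpha / INR N) with (psi N - (th1 N + alpha / INR N)) in H2 by ring.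
replace 1 with (1 - gram_ratio 0 0 s0) by (unfold gram_ratio; field; lra).
eapply Rle_trans; [|exact Hd2].
apply (eta_rel_near_limit (Mf N) (th1 N) (th1 N + alpha / INR N) (psi N));
  auto using Mf_ge_1; rewrite ?Rabs_R0; try apply sinc_bound; try lra; rewrite ?Rminus_0_r; auto.
replace (th1 N + alpha / INR N - th1 N) with (alpha / INR N) by ring.
apply H3; rewrite Rabs_right; lra.
Qed.

Lemma eta_pointwise_cv beta :
  Un_cv (fun N => eta N (th1 N + beta / INR N)) (1 - kappa c alpha beta).
Proof.
apply Un_cv_eventually; intros eps He.
generalize (eta_uniform_on_ball (Rabs beta) eps (Rabs_pos _) He).
apply eventually_mono; intros N HN; apply HN; lra.
Qed.

Lemma kappa_le_1 beta : kappa c alpha beta <= 1.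
Proof.
assert (0 <= 1 - kappa c alpha beta); [|lra].
apply (Un_cv_le_eventually _ (fun _ => 0) _ 0 (eta_pointwise_cv beta) (Un_cv_const 0)).
exists O; intros N _; eapply eta_rel_nonneg; apply heta.
Qed.

Lemma cos_scaled_cv (q : nat -> R) l x :
  Un_cv q l -> Un_cv (fun N => 2 - 2 * cos (q N * x)) (2 - 2 * cos (l * x)).
Proof.
intros Hq; apply CV_minus; [apply Un_cv_const|]; apply CV_mult; [apply Un_cv_const|].
apply (continuity_seq cos (fun N => q N * x)); [apply continuity_cos|].
apply CV_mult; [exact Hq | apply Un_cv_const].
Qed.

(* The lower bound of [eta_rel_lower_bound] with [m = M / K], in the limit. *)
Lemma kappa_gap_lower_bound K beta : (3 <= K)%nat ->
  / INR K * (2 - 2 * cos (c / INR K * beta)) * (2 - 2 * cos (c / INR K * (alpha - beta)))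
  <= 6 * (1 - kappa c alpha beta).
Proof.
intros HK; assert (HKr : 3 <= INR K) by (apply le_INR in HK; simpl in HK; lra).
set (q := fun N => INR (Mf N / K) / INR N).
apply (Un_cv_le_eventually (fun N => 6 * eta N (th1 N + beta / INR N))
  (fun N => INR (Mf N / K) / INR (Mf N) * (2 - 2 * cos (q N * beta))
            * (2 - 2 * cos (q N * (alpha - beta))))).
- apply CV_mult; [apply Un_cv_const | apply eta_pointwise_cv].
- apply CV_mult; [apply CV_mult|]; [apply (Mf_div_Mf_cv c); auto; lia| |];
    apply cos_scaled_cv, (Mf_div_ratio_cv c); auto; lia.
- generalize (Mf_unbounded c Mf hc hMc (INR K)); apply eventually_mono; intros N HN.
  destruct (floor_div_bounds (Mf N) K ltac:(lia)) as [D1 D2].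
  assert (Hm1 : (1 <= Mf N / K)%nat) by (destruct (Mf N / K)%nat; [simpl in D2; lra | lia]).
  assert (Hm3 : (3 * (Mf N / K) <= Mf N)%nat)
    by (apply INR_le; rewrite mult_INR; simpl (INR 3); pose proof (pos_INR (Mf N / K)); nra).
  pose proof (eta_rel_lower_bound (Mf N) (Mf N / K) (th1 N + beta / INR N) (th1 N)
    (th1 N + alpha / INR N) Hm1 Hm3 _ (heta N _)) as EL.
  unfold q; replace (INR (Mf N / K) * (th1 N - (th1 N + beta / INR N)))
    with (- (INR (Mf N / K) / INR N * beta)) in EL by (unfold Rdiv; ring).
  replace (INR (Mf N / K) * (th1 N + alpha / INR N - (th1 N + beta / INR N)))
    with (INR (Mf N / K) / INR N * (alpha - beta)) in EL by (unfold Rdiv; ring).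
  rewrite cos_neg in EL; exact EL.
Qed.

Lemma kappa_lt_1 beta : beta <> 0 -> beta <> alpha -> kappa c alpha beta < 1.
Proof.
intros Hb0 Hba; pose proof PI_RGT_0.
assert (HPI : 3 < PI) by (pose proof PI2_3_2; lra).
pose proof (Rabs_pos beta); pose proof (Rabs_pos (alpha - beta)).
destruct (INR_unbounded ((Rabs beta + Rabs (alpha - beta)) * c / 6 + 3)) as [K HK].
assert (HK0 : 0 <= (Rabs beta + Rabs (alpha - beta)) * c / 6)
  by (apply Rmult_le_pos; [nra | lra]).
assert (HK3 : (3 <= K)%nat) by (apply INR_le; simpl; lra).
assert (HKr : 0 < INR K) by lra.
assert (Hcos : forall x, x <> 0 -> Rabs x <= Rabs beta + Rabs (alpha - beta) ->
          0 < 2 - 2 * cos (c / INR K * x)).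
{ intros x Hx Hxb; assert (Hck : 0 < c / INR K) by (apply Rdiv_lt_0_compat; lra).
  assert (cos (c / INR K * x) < 1); [|lra].
  apply cos_lt_1; rewrite Rabs_mult, (Rabs_right (c / INR K)) by lra;
    [apply Rmult_lt_0_compat; [lra | apply Rabs_pos_lt; auto]|].
  replace (c / INR K * Rabs x) with (c * Rabs x / INR K) by (field; lra).
  apply Rdiv_lt_of_lt_mult; [lra|]; nra. }
pose proof (Hcos beta Hb0 ltac:(lra)).
pose proof (Hcos (alpha - beta) ltac:(lra) ltac:(lra)).
pose proof (kappa_gap_lower_bound K beta HK3).
assert (0 < / INR K) by (apply Rinv_0_lt_compat; lra).
assert (0 < / INR K * (2 - 2 * cos (c / INR K * beta))
            * (2 - 2 * cos (c / INR K * (alpha - beta)))) by (repeat apply Rmult_lt_0_compat; lra).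
lra.
Qed.

Lemma kappa_eq_1 beta : beta = 0 \/ beta = alpha -> kappa c alpha beta = 1.
Proof.
pose proof sinc_gap_pos; intros [-> | ->]; unfold kappa; fold s0.
- rewrite Rmult_0_l, Rdiv_0_l, sinc_0.
  replace ((0 - alpha) * c / 2) with (- (alpha * c / 2)) by field.
  rewrite sinc_opp; fold s0; field; lra.
- rewrite Rminus_diag, Rmult_0_l, Rdiv_0_l, sinc_0; fold s0; field; lra.
Qed.

End Main.

Theorem lemma1
  (c : R) (hc : 0 < c)
  (Mf : nat -> nat) (hM2 : forall N, (2 <= Mf N)%nat)
  (hMc : Un_cv (fun N => INR (Mf N) / INR N) c)
  (alpha : R) (halpha : 0 < alpha)
  (th1 : nat -> R)
  (eta : nat -> R -> R)
  (heta : forall N theta,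
      eta_rel (Mf N) (th1 N) (th1 N + alpha / INR N) theta (eta N theta)) :
  (forall psi : nat -> R,
      (forall N, - PI <= psi N <= PI) ->
      (forall B : R, exists N0, forall N, (N0 <= N)%nat ->
          B <= INR N * dist2pi (psi N) (th1 N)) ->
      Un_cv (fun N => eta N (psi N)) 1)
  /\
  (forall K : R -> Prop, compact K ->
      forall eps, 0 < eps -> exists N0, forall N, (N0 <= N)%nat ->
        forall beta, K beta ->
          Rabs (eta N (th1 N + beta / INR N) - (1 - kappa c alpha beta)) <= eps)
  /\
  (forall beta : R,
      kappa c alpha beta <= 1 /\
      (kappa c alpha beta = 1 <-> beta = 0 \/ beta = alpha)).
Proof.
split; [|split].
- intros psi _ Hfar; exact (eta_far_cv_1 c Mf alpha th1 eta hc hM2 hMc halpha heta psi Hfar).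
- intros K HK eps He; destruct (compact_P1 K HK) as [lo [hi Hb]].
  pose proof (Rabs_pos lo); pose proof (Rabs_pos hi).
  generalize (eta_uniform_on_ball c Mf alpha th1 eta hc hM2 hMc halpha heta
    (Rabs lo + Rabs hi) eps ltac:(lra) He).
  apply eventually_mono; intros N HN beta Kb; apply HN.
  destruct (Hb beta Kb); pose proof (Rle_abs hi); pose proof (Rle_abs (- lo)).
  rewrite Rabs_Ropp in *; apply Rabs_le; lra.
- intros beta; split; [exact (kappa_le_1 c Mf alpha th1 eta hc hM2 hMc halpha heta beta)|].
  split; [|apply kappa_eq_1; auto].
  intros H1; destruct (Req_EM_T beta 0) as [|E]; [left; auto|].
  destruct (Req_EM_T beta alpha) as [|E']; [right; auto|].
  pose proof (kappa_lt_1 c Mf alpha th1 eta hc hM2 hMc halpha heta beta E E'); lra.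
Qed.
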